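(* Let $\mathcal{X}$ be a finite alphabet and let $P_0,P_1$ be probability mass functions on $\mathcal{X}$ with the same support $\mathcal{X}$. Let $n>1$, $k^\star\in(1,n]$ an integer, and $\mathcal{D}=(x_1,\dots,x_n)$ a random dataset with independent entries, $x_1,\dots,x_{k^\star-1}\sim P_0$ and $x_{k^\star},\dots,x_n\sim P_1$. Let $\hat k\in\arg\max_{k\in[n]}\sum_{i=k}^n\log\frac{P_1(x_i)}{P_0(x_i)}$. Let $s=\max_{x}\log\frac{P_1(x)}{P_0(x)}-\min_{x}\log\frac{P_1(x)}{P_0(x)}$ and $C=\min\{D_{\mathrm{KL}}(P_0\|P_1),D_{\mathrm{KL}}(P_1\|P_0)\}$. Then for every $\alpha\in[n]$, the estimator is $(\alpha,\beta)$-accurate with $$\beta\le 2\min\Big\{\frac{t(1-t^M)}{1-t};\ \exp\big(-\alpha I_{ch}(P_0,P_1)\big)\Big\},$$ where $t=\exp(-\alpha C^2/s^2)$ and $M=\lfloor\frac{n-1}{\alpha}\rfloor$.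
   Context: $[a]=\{1,\dots,a\}$; natural logarithms. $(\alpha,\beta)$-accurate means $\mathbb{P}\{\hat k\notin[k^\star-\alpha,k^\star+\alpha]\}=\beta$ (so the claim bounds this probability). Chernoff information: $I_{ch}(P_0,P_1)=-\min_{\lambda\in(0,1)}\log\big(\sum_{x}P_0(x)^\lambda P_1(x)^{1-\lambda}\big)$. *)

From HB Require Import structures.
From mathcomp Require Import all_boot all_order all_algebra.
From mathcomp Require Import all_classical all_reals all_analysis.
Set Implicit Arguments. Unset Strict Implicit. Unset Printing Implicit Defensive.
Import Order.TTheory GRing.Theory Num.Theory.
Local Open Scope ring_scope.
Local Open Scope classical_set_scope.

Section ChangePoint.
Variables (R : realType) (X : finType).

Definition full_pmf (P : X -> R) : Prop :=
  (forall x, 0 < P x) /\ \sum_(x : X) P x = 1.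

Definition llr (P0 P1 : X -> R) (x : X) : R := ln (P1 x / P0 x).

Definition KL (P Q : X -> R) : R := \sum_(x : X) P x * ln (P x / Q x).

(* s = max_x llr - min_x llr, written as max_{x,y} (llr x - llr y) (>= 0) *)
Definition llr_span (P0 P1 : X -> R) : R :=
  \big[Num.max/0]_(x : X) \big[Num.max/0]_(y : X) (llr P0 P1 x - llr P0 P1 y).

(* Chernoff information: - min_{lambda in (0,1)} log sum_x P0^l P1^(1-l),
   written as the supremum of the negated quantity over (0,1). *)
Definition chernoff_info (P0 P1 : X -> R) : R :=
  sup [set - ln (\sum_(x : X) (P0 x `^ l) * (P1 x `^ (1 - l))) | l in `]0, 1[%classic].

(* probability of dataset d = (x_1..x_n) (x_{i+1} = d i) with change point kstar:
   x_j ~ P0 for j < kstar, x_j ~ P1 for j >= kstar, independent. *)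
Definition data_prob (n kstar : nat) (P0 P1 : X -> R) (d : {ffun 'I_n -> X}) : R :=
  \prod_(i < n) (if (i.+1 < kstar)%N then P0 (d i) else P1 (d i)).

Definition cp_score (n : nat) (P0 P1 : X -> R) (d : {ffun 'I_n -> X}) (k : nat) : R :=
  \sum_(i < n | (k <= i.+1)%N) llr P0 P1 (d i).

Definition is_argmax_estimator (n : nat) (P0 P1 : X -> R)
    (khat : {ffun 'I_n -> X} -> nat) : Prop :=
  forall d, (1 <= khat d <= n)%N /\
    (forall k, (1 <= k <= n)%N -> cp_score P0 P1 d k <= cp_score P0 P1 d (khat d)).

Definition miss_prob (n kstar alpha : nat) (P0 P1 : X -> R)
    (khat : {ffun 'I_n -> X} -> nat) : R :=
  \sum_(d : {ffun 'I_n -> X} | (khat d + alpha < kstar)%N || (kstar + alpha < khat d)%N)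
     data_prob kstar P0 P1 d.

End ChangePoint.

From Pilot Require Import Defs.
From HB Require Import structures.
From mathcomp Require Import all_boot all_order all_algebra.
From mathcomp Require Import all_classical all_reals all_analysis.
From mathcomp Require Import perm ring lra zify.
Import Order.TTheory GRing.Theory Num.Theory.
Local Open Scope ring_scope.
Set Implicit Arguments. Unset Strict Implicit. Unset Printing Implicit Defensive.

(* If khat falls more than alpha before k*, maximality of the score makes the sum of
   the log-likelihood ratios of x_khat, ..., x_(k*-1) nonnegative: a partial sum of at
   least alpha i.i.d. P0-increments, read backwards from k* - 1.  If it falls more than
   alpha after k*, the same holds for the negated ratios of the P1-samples x_k*, ...
   For i.i.d. increments Z with rho = E exp(mu Z), an optional stopping (Ville) argument
   bounds the probability that a partial sum of length >= alpha is nonnegative by rho^alpha.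
   With mu = 2C/s^2 the mean of Z is at most -C and its variance at most s^2/4, so
   rho <= exp(-C^2/s^2); with mu = 1 - lambda (resp. lambda), rho is the Chernoff
   coefficient, and optimizing over lambda gives exp(-alpha I).  The two sides give twice
   the minimum; t <= t(1 - t^M)/(1 - t) as soon as M >= 1, and for M = 0 no miss is
   possible. *)

Section RealFacts.
Variable R : realType.
Implicit Types (u w z : R).

Lemma expR_le_inv1B w : w < 1 -> expR w <= (1 - w)^-1.
Proof.
move=> w_lt1; have pos1B : 0 < 1 - w by lra.
rewrite -[expR w]invrK -expRN lef_pV2 ?posrE ?expR_gt0 //.
exact: expR_ge1Dx.
Qed.

Lemma expR_le_quadratic z : z <= 1 -> expR z <= 1 + z + z ^+ 2.
Proof.
move=> z_le1; have [z_le0 | z_gt0] := lerP z 0.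
  have pos1B : 0 < 1 - z by lra.
  apply: le_trans (expR_le_inv1B (le_lt_trans z_le0 ltr01)) _.
  rewrite -(ler_pM2r pos1B) mulVf ?gt_eqF //.
  have : 0 <= - z * (z * z) by rewrite mulr_ge0 ?oppr_ge0 // -expr2 sqr_ge0.
  rewrite expr2; nra.
(* Write z = 8 y: then e^y <= 1/(1-y) is sharp enough, since (8/7)^8 < 3. *)
pose y := z / 8.
have [y_ge0 y_le] : 0 <= y /\ y <= 1 / 8 by rewrite /y; split; lra.
have pos1B : 0 < 1 - y by lra.
have -> : z = 8%:R * y by rewrite /y; lra.
rewrite expRM_natl.
apply: le_trans (lerXn2r 8 _ _ (expR_le_inv1B _)) _;
  rewrite ?nnegrE ?expR_ge0 ?invr_ge0 ?(ltW pos1B) //; first lra.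
have taylor8 : 1 - 8 * y + 28 * y ^+ 2 - 56 * y ^+ 3 <= (1 - y) ^+ 8.
  rewrite !exprS expr0; nra.
have key : 1 <= (1 + 8 * y + 64 * y ^+ 2) * (1 - y) ^+ 8.
  by rewrite !exprS expr0 in taylor8 *; nra.
rewrite exprVn -(ler_pM2r (exprn_gt0 8 pos1B)) mulVf ?gt_eqF ?exprn_gt0 //.
by have -> : (8 * y) ^+ 2 = 64 * y ^+ 2 by ring.
Qed.

Lemma ln_le_subr1 u : 0 < u -> ln u <= u - 1.
Proof. by move=> u_gt0; have := expR_ge1Dx (ln u); rewrite lnK ?posrE //; lra. Qed.

Lemma ln_lt_subr1 u : 0 < u -> u != 1 -> ln u < u - 1.
Proof.
move=> u_gt0 u_neq1; have ln_neq0 : ln u != 0.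
  by apply: contraNneq u_neq1 => ln0; rewrite -[u]lnK ?posrE // ln0 expR0.
by have := expR_gt1Dx ln_neq0; rewrite lnK ?posrE //; lra.
Qed.

End RealFacts.

Section Moments.
Variables (R : realType) (X : finType) (G Z : X -> R).
Hypotheses (G_ge0 : forall x, 0 <= G x) (G_sum1 : \sum_x G x = 1).

Lemma sum_pmf_mulr c : \sum_x G x * c = c.
Proof. by rewrite -big_distrl /= G_sum1 mul1r. Qed.

Lemma sum_centered : \sum_x G x * (Z x - \sum_y G y * Z y) = 0.
Proof.
under eq_bigr do rewrite mulrBr.
by rewrite sumrB sum_pmf_mulr subrr.
Qed.

Lemma sub_mean_le s : (forall x y, Z x - Z y <= s) ->
  forall x, Z x - \sum_y G y * Z y <= s.
Proof.
move=> span_le x.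
have -> : Z x - \sum_y G y * Z y = \sum_y G y * (Z x - Z y).
  by under [RHS]eq_bigr do rewrite mulrBr; rewrite sumrB sum_pmf_mulr.
rewrite -[leRHS]sum_pmf_mulr; apply: ler_sum => y _.
exact: ler_wpM2l.
Qed.

(* Popoviciu's inequality, via the second moment about the midpoint of the range. *)
Lemma variance_le_span s : (forall x y, Z x - Z y <= s) ->
  \sum_x G x * (Z x - \sum_y G y * Z y) ^+ 2 <= s ^+ 2 / 4.
Proof.
move=> span_le; set m := \sum_y G y * Z y.
case: (pickP (fun _ : X => true)) => [x0 _ | X0]; last first.
  by move: G_sum1; rewrite big_pred0 // => /esym/eqP; rewrite oner_eq0.
have [xm _ Zxm_min] := @arg_minP _ _ X x0 xpredT Z isT.
pose c := Z xm + s / 2.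
have second_moment : \sum_x G x * (Z x - c) ^+ 2 =
    \sum_x G x * (Z x - m) ^+ 2 + (m - c) ^+ 2.
  rewrite -[(m - c) ^+ 2]sum_pmf_mulr -big_split /=.
  transitivity (\sum_x (G x * (Z x - m) ^+ 2 + (m - c) ^+ 2 * G x
                        + 2 * (m - c) * (G x * (Z x - m)))).
    by apply: eq_bigr => x _; ring.
  by rewrite big_split /= -big_distrr /= sum_centered mulr0 addr0;
     apply: eq_bigr => x _; ring.
apply: le_trans (_ : \sum_x G x * (Z x - c) ^+ 2 <= _).
  by rewrite second_moment lerDl sqr_ge0.
rewrite -[leRHS]sum_pmf_mulr; apply: ler_sum => x _; apply: ler_wpM2l => //.
have := Zxm_min x isT; have := span_le x xm; rewrite /c; nra.
Qed.

Lemma mgf_le s mu : 0 <= mu -> mu * s <= 1 -> (forall x y, Z x - Z y <= s) ->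
  \sum_x G x * expR (mu * Z x) <=
  expR (mu * \sum_y G y * Z y + mu ^+ 2 * (s ^+ 2 / 4)).
Proof.
move=> mu_ge0 mus_le1 span_le; set m := \sum_y G y * Z y.
have shift : \sum_x G x * expR (mu * Z x) =
    expR (mu * m) * \sum_x G x * expR (mu * (Z x - m)).
  rewrite big_distrr /=; apply: eq_bigr => x _.
  by rewrite mulrBr expRD expRN; field; rewrite gt_eqF ?expR_gt0.
rewrite shift expRD ler_wpM2l ?expR_ge0 //.
apply: le_trans (expR_ge1Dx _).
apply: le_trans (_ : \sum_x G x * (1 + mu * (Z x - m) + (mu * (Z x - m)) ^+ 2) <= _).
  apply: ler_sum => x _; apply: ler_wpM2l => //; apply: expR_le_quadratic.
  apply: le_trans mus_le1; exact: ler_wpM2l (sub_mean_le span_le x).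
rewrite (eq_bigr (fun x =>
    G x + mu * (G x * (Z x - m)) + mu ^+ 2 * (G x * (Z x - m) ^+ 2))); last first.
  by move=> x _; ring.
rewrite !big_split /= -!big_distrr /= sum_centered G_sum1 mulr0 addr0 lerD2l.
by rewrite ler_wpM2l ?exprn_ge0 // variance_le_span.
Qed.

Lemma mgf_le_neg_mean C s : 0 < C -> 2 * C <= s ->
  (forall x y, Z x - Z y <= s) -> \sum_y G y * Z y <= - C ->
  \sum_x G x * expR (2 * C / s ^+ 2 * Z x) <= expR (- (C ^+ 2 / s ^+ 2)).
Proof.
move=> C_gt0 Cs span_le mean_le; have s_gt0 : 0 < s by lra.
set mu := 2 * C / s ^+ 2.
have mu_gt0 : 0 < mu by rewrite divr_gt0 ?exprn_gt0 //; lra.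
apply: le_trans (mgf_le (ltW mu_gt0) _ span_le) _.
  have -> : mu * s = 2 * C / s by rewrite /mu; field; rewrite gt_eqF.
  by rewrite ler_pdivrMr // mul1r.
rewrite ler_expR.
have mean_term := ler_wpM2l (ltW mu_gt0) mean_le.
have mean_val : mu * - C = - (2 * (C ^+ 2 / s ^+ 2)).
  by rewrite /mu; field; rewrite gt_eqF.
have var_val : mu ^+ 2 * (s ^+ 2 / 4) = C ^+ 2 / s ^+ 2.
  by rewrite /mu; field; rewrite gt_eqF.
lra.
Qed.

End Moments.

Section RandomWalk.
Variable R : realType.

Fixpoint hits_nonneg (w : R) (zs : seq R) : bool :=
  (0 <= w) || if zs is z :: zs' then hits_nonneg (w + z) zs' else false.

Lemma hits_nonneg_take m w zs :
  0 <= w + \sum_(z <- take m zs) z -> hits_nonneg w zs.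
Proof.
elim: zs m w => [|z zs IH] [|m] w /=; rewrite ?big_nil ?addr0; try by move=> ->.
by rewrite big_cons addrA => /IH ->; rewrite orbT.
Qed.

Lemma indicator_le_expR (mu w : R) : 0 <= mu -> (0 <= w)%R%:R <= expR (mu * w).
Proof.
move=> mu_ge0; case: (lerP 0 w) => [w_ge0 | _] /=; last by rewrite expR_ge0.
by apply: le_trans (expR_ge1Dx _); rewrite lerDl mulr_ge0.
Qed.

End RandomWalk.

Section ProductSpace.
Variables (R : realType) (X : finType) (N : nat) (g : 'I_N -> X -> R).
Local Notation space := {ffun 'I_N -> X}.

Definition prod_pmf (d : space) : R := \prod_i g i (d i).

Definition expect (F : space -> R) : R := \sum_d prod_pmf d * F d.

Definition prob (E : pred space) : R := \sum_(d | E d) prod_pmf d.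

Definition ignores (s : seq 'I_N) (F : space -> R) : Prop :=
  forall d d' : space, (forall j, j \notin s -> d j = d' j) -> F d = F d'.

Lemma ignores_sub s1 s2 F : {subset s1 <= s2} -> ignores s2 F -> ignores s1 F.
Proof.
move=> sub12 F_ign d d' e; apply: F_ign => j j_notin; apply: e.
by apply: contra j_notin; exact: sub12.
Qed.

Lemma ignores_behead i s F : ignores (i :: s) F -> ignores s F.
Proof. by apply: ignores_sub => j j_s; rewrite inE j_s orbT. Qed.

Lemma ignores_head i s F : ignores (i :: s) F -> ignores [:: i] F.
Proof. by apply: ignores_sub => j; rewrite !inE => ->. Qed.

Lemma eq_expect F G : F =1 G -> expect F = expect G.
Proof. by move=> FG; apply: eq_bigr => d _; rewrite FG. Qed.

Lemma sum_fiber_const i (q : space -> R) x y : ignores [:: i] q ->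
  \sum_(d : space | d i == x) q d = \sum_(d : space | d i == y) q d.
Proof.
move=> q_ign.
pose swap (d : space) : space :=
  [ffun j => if j == i then tperm x y (d i) else d j].
have swapK : involutive swap.
  move=> d; apply/ffunP => j; rewrite !ffunE.
  by case: eqP => [-> | _]; rewrite ?eqxx ?tpermK.
rewrite (reindex_inj (inv_inj swapK)); apply: eq_big => d.
  by rewrite ffunE eqxx -[x in _ == x](tpermR x y) (inj_eq perm_inj).
move=> _; apply: q_ign => j; rewrite inE ffunE => /negbTE -> //.
Qed.

Hypotheses (g_ge0 : forall i x, 0 <= g i x) (g_sum1 : forall i, \sum_x g i x = 1).

Lemma prod_pmf_ge0 d : 0 <= prod_pmf d.
Proof. exact: prodr_ge0. Qed.

Lemma ler_expect F G : (forall d, F d <= G d) -> expect F <= expect G.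
Proof. by move=> FG; apply: ler_sum => d _; rewrite ler_wpM2l ?prod_pmf_ge0. Qed.

Lemma expect_ge0 F : (forall d, 0 <= F d) -> 0 <= expect F.
Proof. by move=> F_ge0; apply: sumr_ge0 => d _; rewrite mulr_ge0 ?prod_pmf_ge0. Qed.

Lemma expectD F G : expect (fun d => F d + G d) = expect F + expect G.
Proof. by rewrite -big_split; apply: eq_bigr => d _; rewrite mulrDr. Qed.

Lemma expect1 : expect (fun=> 1) = 1.
Proof.
rewrite /expect /prod_pmf; under eq_bigr do rewrite mulr1.
by rewrite -(bigA_distr_bigA g) big1.
Qed.

Lemma probE E : prob E = expect (fun d => (E d)%:R).
Proof.
by rewrite /prob big_mkcond; apply: eq_bigr => d _; case: (E d); rewrite ?mulr1 ?mulr0.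
Qed.

Lemma prob_le1 E : prob E <= 1.
Proof.
rewrite probE -[leRHS]expect1; apply: ler_expect => d.
by case: (E d); rewrite /= ?lexx ?ler01.
Qed.

Lemma prob_orE_le A B : prob (fun d => A d || B d) <= prob A + prob B.
Proof.
rewrite !probE -expectD; apply: ler_expect => d.
by case: (A d); case: (B d); rewrite /= ?addr0 ?add0r ?lerDl ?ler01.
Qed.

Lemma expect_indepM i F (phi : X -> R) : ignores [:: i] F ->
  expect (fun d => F d * phi (d i)) = (\sum_x g i x * phi x) * expect F.
Proof.
move=> F_ign; pose q (d : space) := (\prod_(j | j != i) g j (d j)) * F d.
have q_ign : ignores [:: i] q.
  move=> d d' e; rewrite /q (F_ign _ _ e); congr (_ * _).
  by apply: eq_bigr => j j_neq; rewrite e // inE.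
have by_fiber (h : X -> R) : expect (fun d => F d * h (d i)) =
    \sum_x (g i x * h x) * \sum_(d : space | d i == x) q d.
  rewrite /expect (partition_big (fun d : space => d i) xpredT) //=.
  apply: eq_bigr => x _; rewrite big_distrr /=; apply: eq_big => // d /eqP <-.
  by rewrite /prod_pmf (bigD1 i) //= /q; ring.
have expectF x : expect F = \sum_(d : space | d i == x) q d.
  rewrite -(eq_expect (fun d => mulr1 (F d))) (by_fiber (fun=> 1)).
  under eq_bigr => y _ do rewrite mulr1 (sum_fiber_const y x q_ign).
  exact: sum_pmf_mulr.
rewrite by_fiber big_distrl /=; apply: eq_bigr => x _.
by rewrite (expectF x).
Qed.

Lemma expect_expR_sum (Z : X -> R) mu s F : uniq s -> ignores s F ->
  expect (fun d => F d * expR (mu * \sum_(i <- s) Z (d i))) =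
  (\prod_(i <- s) \sum_x g i x * expR (mu * Z x)) * expect F.
Proof.
elim: s F => [|i s IH] F /=.
  move=> _ _; rewrite big_nil mul1r; apply: eq_expect => d.
  by rewrite big_nil mulr0 expR0 mulr1.
move=> /andP [i_notin uniq_s] F_ign.
have split_head d : F d * expR (mu * \sum_(j <- i :: s) Z (d j)) =
    (F d * expR (mu * Z (d i))) * expR (mu * \sum_(j <- s) Z (d j)).
  by rewrite big_cons mulrDr expRD mulrA.
rewrite (eq_expect split_head) IH //; last first.
  by move=> d d' e; rewrite (ignores_behead F_ign e) (e i i_notin).
rewrite (expect_indepM (fun x => expR (mu * Z x))) ?big_cons; first by ring.
exact: ignores_head F_ign.
Qed.

(* Ville's maximal inequality, by induction on the number of steps: the weight [H]
   carries the indicator of "not yet stopped". *)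
Lemma expect_hits_nonneg_le (Z : X -> R) mu s (H W : space -> R) :
  0 <= mu -> uniq s -> (forall i, i \in s -> \sum_x g i x * expR (mu * Z x) <= 1) ->
  (forall d, 0 <= H d) -> ignores s H -> ignores s W ->
  expect (fun d => H d * (hits_nonneg (W d) [seq Z (d i) | i <- s])%:R) <=
  expect (fun d => H d * expR (mu * W d)).
Proof.
move=> mu_ge0; elim: s H W => [|i s IH] H W /=.
  move=> _ _ H_ge0 _ _; apply: ler_expect => d.
  by rewrite orbF ler_wpM2l ?indicator_le_expR.
move=> /andP [i_notin uniq_s] mgf_le1 H_ge0 H_ign W_ign.
pose H' d := H d * (W d < 0)%R%:R.
pose W' d := W d + Z (d i).
have H'_ge0 d : 0 <= H' d by rewrite mulr_ge0.
have H'_ign : ignores (i :: s) H'.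
  by move=> d d' e; rewrite /H' (H_ign _ _ e) (W_ign _ _ e).
have W'_ign : ignores s W'.
  by move=> d d' e; rewrite /W' (ignores_behead W_ign e) (e i i_notin).
have mgf_i := mgf_le1 i (mem_head i s).
have mgf_s j : j \in s -> \sum_x g j x * expR (mu * Z x) <= 1.
  by move=> j_s; apply: mgf_le1; rewrite inE j_s orbT.
have IH' := IH H' W' uniq_s mgf_s H'_ge0 (ignores_behead H'_ign) W'_ign.
apply: le_trans (_ : expect (fun d => H d * (0 <= W d)%R%:R +
    H' d * (hits_nonneg (W' d) [seq Z (d j) | j <- s])%:R) <= _).
  apply: ler_expect => d; rewrite /H'.
  by case: (lerP 0 (W d)) => _ /=; rewrite ?mulr1 ?mulr0 ?mul0r ?add0r ?addr0.
rewrite expectD; apply: le_trans (lerD (lexx _) IH') _.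
have -> : expect (fun d => H' d * expR (mu * W' d)) =
    (\sum_x g i x * expR (mu * Z x)) * expect (fun d => H' d * expR (mu * W d)).
  rewrite -expect_indepM.
    by apply: eq_expect => d; rewrite /W' mulrDr expRD mulrA.
  by apply: (@ignores_head i s) => d d' e; rewrite (H'_ign _ _ e) (W_ign _ _ e).
apply: le_trans (lerD (lexx _) (ler_piMl _ mgf_i)) _.
  by apply: expect_ge0 => d; rewrite mulr_ge0 ?expR_ge0.
rewrite -expectD; apply: ler_expect => d; rewrite /H' -mulrA -mulrDr ler_wpM2l //.
move: (indicator_le_expR (W d) mu_ge0).
by case: (lerP 0 (W d)) => _ /=; rewrite ?mul0r ?mul1r ?addr0 ?add0r.
Qed.

Lemma prob_partial_sum_nonneg_le (P Z : X -> R) mu s a (E : pred space) :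
  (forall x, 0 <= P x) -> 0 <= mu -> uniq s -> {in s, forall i, g i =1 P} ->
  (forall d, E d ->
     exists m, [/\ (a <= m)%N, (m <= size s)%N & 0 <= \sum_(i <- take m s) Z (d i)]) ->
  prob E <= (\sum_x P x * expR (mu * Z x)) ^+ a.
Proof.
move=> P_ge0 mu_ge0 uniq_s law_s witness.
set rho := \sum_x P x * expR (mu * Z x).
have rho_ge0 : 0 <= rho by apply: sumr_ge0 => x _; rewrite mulr_ge0 ?expR_ge0.
have mgf_s i : i \in s -> \sum_x g i x * expR (mu * Z x) = rho.
  by move=> i_s; apply: eq_bigr => x _; rewrite law_s.
have [rho_gt1 | rho_le1] := ltrP 1 rho.
  exact: le_trans (prob_le1 E) (exprn_ege1 _ (ltW rho_gt1)).
have [a_big | a_le] := ltnP (size s) a.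
  rewrite /prob big1 ?exprn_ge0 // => d /witness [m [am ms _]].
  by move: (leq_trans am ms); rewrite leqNgt a_big.
pose W d := \sum_(i <- take a s) Z (d i).
have hits d : E d -> hits_nonneg (W d) [seq Z (d i) | i <- drop a s].
  move=> /witness [m [am _ sum_ge0]]; apply: (@hits_nonneg_take R (m - a)%N).
  by rewrite -map_take big_map /W -big_cat -takeD subnKC.
have take_notin_drop j : j \in take a s -> j \notin drop a s.
  move: uniq_s; rewrite -{1}(cat_take_drop a s) cat_uniq => /and3P [_ /hasPn disj _] jt.
  by apply/negP => /disj; rewrite jt.
rewrite probE.
apply: le_trans (_ : expect (fun d =>
    1 * (hits_nonneg (W d) [seq Z (d i) | i <- drop a s])%:R) <= _).
  by apply: ler_expect => d; rewrite mul1r ler_nat; case Ed: (E d); rewrite // (hits d Ed).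
apply: le_trans (expect_hits_nonneg_le mu_ge0 (drop_uniq a uniq_s) _ _ _ _) _ => //.
- by move=> i /mem_drop i_s; rewrite mgf_s.
- move=> d d' e; apply: eq_big_seq => j j_take.
  by rewrite e // take_notin_drop.
rewrite expect_expR_sum ?take_uniq // expect1 mulr1.
rewrite (eq_big_seq (fun=> rho)); last by move=> i /mem_take; exact: mgf_s.
by rewrite big_const_seq count_predT iter_mulr_1 size_takel.
Qed.

End ProductSpace.

Section Divergences.
Variables (R : realType) (X : finType).
Implicit Types P Q : X -> R.

Lemma KL_gt0 P Q : full_pmf P -> full_pmf Q -> P <> Q -> 0 < KL P Q.
Proof.
move=> [P_gt0 P_sum1] [Q_gt0 Q_sum1] PQ.
have [x0 Px0] : exists x, P x != Q x.
  apply: contra_notP PQ => /forallNP PQ_eq; apply: funext => x.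
  by apply/eqP/negPn/negP; exact: PQ_eq.
have gap x : P x * ln (P x / Q x) =
    (P x - Q x) + P x * (Q x / P x - 1 - ln (Q x / P x)).
  rewrite -[P x / Q x]invf_div lnV ?posrE ?divr_gt0 //.
  by field; rewrite gt_eqF.
have term_ge x : P x - Q x <= P x * ln (P x / Q x).
  by rewrite gap lerDl mulr_ge0 ?(ltW (P_gt0 x)) // subr_ge0 ln_le_subr1 ?divr_gt0.
have term_gt : P x0 - Q x0 < P x0 * ln (P x0 / Q x0).
  rewrite gap ltrDl mulr_gt0 // subr_gt0 ln_lt_subr1 ?divr_gt0 //.
  apply: contraTneq Px0 => QP1.
  by rewrite negbK -[Q x0](divfK (lt0r_neq0 (P_gt0 x0))) QP1 mul1r.
have sum0 : \sum_x (P x - Q x) = 0 by rewrite sumrB P_sum1 Q_sum1 subrr.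
rewrite /KL -[ltLHS]sum0 (bigD1 x0) //= [ltRHS](bigD1 x0) //=.
exact: ltr_leD term_gt (ler_sum _ (fun x _ => term_ge x)).
Qed.

Definition chernoff_coef P0 P1 (l : R) : R := \sum_x P0 x `^ l * P1 x `^ (1 - l).

Lemma le_expR_chernoff P0 P1 (a : nat) (v : R) : (0 < a)%N ->
  (forall l, 0 < l < 1 -> v <= chernoff_coef P0 P1 l ^+ a) ->
  v <= expR (- (a%:R * chernoff_info P0 P1)).
Proof.
move=> a_gt0 v_le.
have [v_le0 | v_gt0] := lerP v 0; first exact: le_trans v_le0 (expR_ge0 _).
have coef_gt0 l : 0 < l < 1 -> 0 < chernoff_coef P0 P1 l.
  move=> l01; rewrite lt_neqAle sumr_ge0 ?andbT => [|x _]; last first.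
    by rewrite mulr_ge0 ?powR_ge0.
  apply/negP => /eqP coef0; have := v_le l l01.
  by rewrite -coef0 expr0n gtn_eqF //=; lra.
suff I_le : chernoff_info P0 P1 <= - ln v / a%:R.
  by rewrite -[v]lnK ?posrE // ler_expR lerNr mulrC -ler_pdivlMr ?ltr0n.
apply: ge_sup.
  exists (- ln (chernoff_coef P0 P1 (1 / 2))); exists (1 / 2) => //.
  by rewrite /= in_itv /=; apply/andP; split; lra.
move=> _ [l l01 <-]; rewrite /= in_itv /= in l01.
rewrite ler_pdivlMr ?ltr0n // mulNr lerN2 -/(chernoff_coef P0 P1 l).
rewrite mulr_natr -lnXn ?coef_gt0 //.
by rewrite ler_ln ?posrE ?exprn_gt0 ?coef_gt0 // v_le.
Qed.

End Divergences.

Section LogLikelihoodRatio.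
Variables (R : realType) (X : finType) (P0 P1 : X -> R).
Hypotheses (P0_pmf : full_pmf P0) (P1_pmf : full_pmf P1) (P01 : P0 <> P1).

Local Notation llr := (llr P0 P1).
Local Notation span := (llr_span P0 P1).
Local Notation C := (Num.min (KL P0 P1) (KL P1 P0)).

Lemma llrE x : llr x = ln (P1 x) - ln (P0 x).
Proof. by rewrite /Defs.llr ln_div ?posrE ?P0_pmf.1 ?P1_pmf.1. Qed.

Lemma KL01_llr : KL P0 P1 = - \sum_x P0 x * llr x.
Proof.
rewrite -sumrN; apply: eq_bigr => x _.
by rewrite llrE ln_div ?posrE ?P0_pmf.1 ?P1_pmf.1 // -mulrN opprB.
Qed.

Lemma KL10_llr : KL P1 P0 = \sum_x P1 x * llr x.
Proof. by apply: eq_bigr => x _; rewrite llrE ln_div ?posrE ?P0_pmf.1 ?P1_pmf.1. Qed.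

Lemma llr_span_ge x y : llr x - llr y <= span.
Proof.
apply: le_trans (le_bigmax _ _ x).
exact: (le_bigmax _ (fun y => llr x - llr y) y).
Qed.

Lemma mean_llr_le : \sum_x P0 x * llr x <= - C.
Proof. by rewrite lerNr -KL01_llr ge_min lexx. Qed.

Lemma mean_neg_llr_le : \sum_x P1 x * - llr x <= - C.
Proof.
under eq_bigr do rewrite mulrN.
by rewrite sumrN lerN2 -KL10_llr ge_min lexx orbT.
Qed.

Lemma KL_min_gt0 : 0 < C.
Proof. by rewrite lt_min !KL_gt0 //; exact: nesym. Qed.

Lemma KL_min_le_span : 2 * C <= span.
Proof.
have P0_ge0 x : 0 <= P0 x := ltW (P0_pmf.1 x).
have KL_sum : KL P0 P1 + KL P1 P0 <= span.
  rewrite KL01_llr KL10_llr addrC; set m := \sum_x P0 x * llr x.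
  have -> : \sum_x P1 x * llr x - m = \sum_x P1 x * (llr x - m).
    by under [RHS]eq_bigr do rewrite mulrBr; rewrite sumrB (sum_pmf_mulr P1_pmf.2).
  rewrite -[leRHS](sum_pmf_mulr P1_pmf.2 span); apply: ler_sum => x _.
  by rewrite ler_wpM2l ?(ltW (P1_pmf.1 x)) ?(sub_mean_le P0_ge0 P0_pmf.2 llr_span_ge).
have C_le0 : C <= KL P0 P1 by rewrite ge_min lexx.
have C_le1 : C <= KL P1 P0 by rewrite ge_min lexx orbT.
lra.
Qed.

Lemma mgf_llr_chernoff l :
  \sum_x P0 x * expR ((1 - l) * llr x) = chernoff_coef P0 P1 l.
Proof.
apply: eq_bigr => x _; have [P0_gt0 P1_gt0] := (P0_pmf.1 x, P1_pmf.1 x).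
rewrite /powR !gt_eqF // -expRD llrE -{1}[P0 x]lnK ?posrE // -expRD.
by congr expR; ring.
Qed.

Lemma mgf_neg_llr_chernoff l :
  \sum_x P1 x * expR (l * - llr x) = chernoff_coef P0 P1 l.
Proof.
apply: eq_bigr => x _; have [P0_gt0 P1_gt0] := (P0_pmf.1 x, P1_pmf.1 x).
rewrite /powR !gt_eqF // -expRD llrE -{1}[P1 x]lnK ?posrE // -expRD.
by congr expR; ring.
Qed.

Lemma prob_side_le N (g : 'I_N -> X -> R) (P Z : X -> R) s alpha
    (E : pred {ffun 'I_N -> X}) :
  (forall i x, 0 <= g i x) -> (forall i, \sum_x g i x = 1) ->
  full_pmf P -> uniq s -> {in s, forall i, g i =1 P} -> (0 < alpha)%N ->
  (forall d, E d -> exists m,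
     [/\ (alpha <= m)%N, (m <= size s)%N & 0 <= \sum_(i <- take m s) Z (d i)]) ->
  (forall x y, Z x - Z y <= span) -> \sum_x P x * Z x <= - C ->
  (forall l, 0 < l < 1 ->
     exists2 mu, 0 <= mu & \sum_x P x * expR (mu * Z x) = chernoff_coef P0 P1 l) ->
  prob g E <= Num.min (expR (- (alpha%:R * C ^+ 2 / span ^+ 2)))
                      (expR (- (alpha%:R * chernoff_info P0 P1))).
Proof.
move=> g_ge0 g_sum1 [P_gt0 P_sum1] uniq_s law_s alpha_gt0 witness span_Z mean_Z
  chernoff_Z.
have P_ge0 x : 0 <= P x := ltW (P_gt0 x).
have partial_sum_le mu (mu_ge0 : 0 <= mu) :=
  prob_partial_sum_nonneg_le g_ge0 g_sum1 P_ge0 mu_ge0 uniq_s law_s witness.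
rewrite le_min; apply/andP; split.
  have span_gt0 : 0 < span by have := KL_min_gt0; have := KL_min_le_span; lra.
  have mu_ge0 : 0 <= 2 * C / span ^+ 2.
    by rewrite divr_ge0 ?exprn_ge0 ?ltW // mulr_gt0 ?KL_min_gt0.
  apply: le_trans (partial_sum_le _ mu_ge0) _.
  have -> : expR (- (alpha%:R * C ^+ 2 / span ^+ 2)) =
      expR (- (C ^+ 2 / span ^+ 2)) ^+ alpha by rewrite -expRM_natl; congr expR; ring.
  apply: lerXn2r; rewrite ?nnegrE ?expR_ge0 //.
    by apply: sumr_ge0 => x _; rewrite mulr_ge0 ?expR_ge0.
  by rewrite (mgf_le_neg_mean P_ge0 P_sum1) ?KL_min_gt0 ?KL_min_le_span.
apply: le_expR_chernoff alpha_gt0 _ => l l01.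
have [mu mu_ge0 <-] := chernoff_Z l l01.
exact: partial_sum_le.
Qed.

End LogLikelihoodRatio.

Lemma big_take_map_iota (V : nmodType) (T : Type) (F : T -> V) (f : nat -> T) a L m :
  (m <= L)%N ->
  \sum_(i <- take m [seq f j | j <- iota a L]) F i = \sum_(a <= j < a + m) F (f j).
Proof.
by move=> mL; rewrite -map_take take_iota (minn_idPl mL) big_map /index_iota addKn.
Qed.

Lemma big_take_map_rev_iota (V : nmodType) (T : Type) (F : T -> V) (f : nat -> T) L m :
  \sum_(i <- take m [seq f j | j <- rev (iota 0 L)]) F i = \sum_(L - m <= j < L) F (f j).
Proof. by rewrite -map_take take_rev size_iota drop_iota add0n big_map big_rev. Qed.

Lemma le_geometric_sum (R : realFieldType) (t : R) M : 0 < t < 1 -> (0 < M)%N ->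
  t <= t * (1 - t ^+ M) / (1 - t).
Proof.
move=> /andP [t_gt0 t_lt1] M_gt0; rewrite ler_pdivlMr ?subr_gt0 // ler_pM2l //.
rewrite lerD2l lerN2 -(prednK M_gt0) exprS; apply: ler_piMr; first exact: ltW.
exact: exprn_ile1 (ltW t_gt0) (ltW t_lt1).
Qed.

Section ChangePointData.
Variables (R : realType) (X : finType) (P0 P1 : X -> R) (n kstar : nat) (i0 : 'I_n).

Definition cp_law (i : 'I_n) (x : X) : R := if (i.+1 < kstar)%N then P0 x else P1 x.

(* With 0-based coordinates, [pre_change] lists x_(k*-1), ..., x_1 (backwards from the
   change point) and [post_change] lists x_k*, ..., x_n. *)
Definition pre_change : seq 'I_n := [seq insubd i0 j | j <- rev (iota 0 kstar.-1)].

Definition post_change : seq 'I_n :=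
  [seq insubd i0 j | j <- iota kstar.-1 (n - kstar.-1)].

Hypothesis kstar_range : (1 < kstar <= n)%N.

Lemma val_insubd_ord j : (j < n)%N -> val (insubd i0 j) = j.
Proof. by move=> j_lt; rewrite val_insubd j_lt. Qed.

Lemma uniq_map_insubd l : (forall j, j \in l -> j < n)%N -> uniq l ->
  uniq [seq insubd i0 j | j <- l].
Proof.
move=> l_lt; rewrite map_inj_in_uniq // => j j' j_l j'_l /(congr1 val).
by rewrite !val_insubd_ord ?l_lt.
Qed.

Lemma pre_change_uniq : uniq pre_change.
Proof.
apply: uniq_map_insubd; rewrite ?rev_uniq ?iota_uniq // => j.
rewrite mem_rev mem_iota; lia.
Qed.

Lemma post_change_uniq : uniq post_change.
Proof. by apply: uniq_map_insubd; rewrite ?iota_uniq // => j; rewrite mem_iota; lia. Qed.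

Lemma cp_law_pre : {in pre_change, forall i, cp_law i =1 P0}.
Proof.
move=> _ /mapP [j + ->] x; rewrite mem_rev mem_iota => j_lt.
rewrite /cp_law val_insubd_ord; last lia.
by have -> : (j.+1 < kstar)%N by lia.
Qed.

Lemma cp_law_post : {in post_change, forall i, cp_law i =1 P1}.
Proof.
move=> _ /mapP [j + ->] x; rewrite mem_iota => j_range.
rewrite /cp_law val_insubd_ord; last lia.
by have -> : (j.+1 < kstar)%N = false by lia.
Qed.

Lemma cp_score_nat d k :
  cp_score P0 P1 d k = \sum_(k.-1 <= j < n) llr P0 P1 (d (insubd i0 j)).
Proof.
rewrite big_geq_mkord; apply: eq_big => [i | i _]; last by rewrite valKd.
by case: k.
Qed.

Lemma cp_score_sub d k k' : (k <= k' <= n)%N ->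
  cp_score P0 P1 d k - cp_score P0 P1 d k' =
  \sum_(k.-1 <= j < k'.-1) llr P0 P1 (d (insubd i0 j)).
Proof.
move=> k_range; rewrite !cp_score_nat (@big_cat_nat _ _ _ k'.-1) ?addrK //; lia.
Qed.

Variables (khat : {ffun 'I_n -> X} -> nat) (alpha : nat).
Hypothesis khat_max : is_argmax_estimator P0 P1 khat.

Lemma pre_change_witness d : (khat d + alpha < kstar)%N -> exists m,
  [/\ (alpha <= m)%N, (m <= size pre_change)%N &
      0 <= \sum_(i <- take m pre_change) llr P0 P1 (d i)].
Proof.
move=> early; have [/andP [khat_ge1 khat_le] score_le] := khat_max d.
exists (kstar - khat d)%N; rewrite size_map size_rev size_iota.
split; try lia.
rewrite big_take_map_rev_iota.
have -> : (kstar.-1 - (kstar - khat d))%N = (khat d).-1 by lia.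
by rewrite -cp_score_sub ?subr_ge0 ?score_le; lia.
Qed.

Lemma post_change_witness d : (kstar + alpha < khat d)%N -> exists m,
  [/\ (alpha <= m)%N, (m <= size post_change)%N &
      0 <= \sum_(i <- take m post_change) - llr P0 P1 (d i)].
Proof.
move=> late; have [/andP [khat_ge1 khat_le] score_le] := khat_max d.
exists (khat d - kstar)%N; rewrite size_map size_iota.
split; try lia.
rewrite sumrN big_take_map_iota; last lia.
have -> : (kstar.-1 + (khat d - kstar))%N = (khat d).-1 by lia.
by rewrite -cp_score_sub ?opprB ?subr_ge0 ?score_le; lia.
Qed.

Lemma miss_prob_eq0 : (n - 1 < alpha)%N -> miss_prob kstar alpha P0 P1 khat = 0.
Proof.
move=> alpha_big; rewrite /miss_prob big_pred0 // => d.
have [/andP [khat_ge1 khat_le] _] := khat_max d.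
by apply/negbTE; rewrite negb_or -!leqNgt; apply/andP; split; lia.
Qed.

Hypotheses (P0_pmf : full_pmf P0) (P1_pmf : full_pmf P1) (P01 : P0 <> P1).
Hypothesis alpha_gt0 : (0 < alpha)%N.

Local Notation t :=
  (expR (- (alpha%:R * Num.min (KL P0 P1) (KL P1 P0) ^+ 2 / llr_span P0 P1 ^+ 2))).
Local Notation B := (expR (- (alpha%:R * chernoff_info P0 P1))).

Lemma cp_law_ge0 i x : 0 <= cp_law i x.
Proof. by rewrite /cp_law; case: ifP => _; rewrite ltW ?P0_pmf.1 ?P1_pmf.1. Qed.

Lemma cp_law_sum1 i : \sum_x cp_law i x = 1.
Proof. by rewrite /cp_law; case: (i.+1 < kstar)%N; [exact: P0_pmf.2 | exact: P1_pmf.2]. Qed.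

Lemma miss_prob_le : miss_prob kstar alpha P0 P1 khat <=
  prob cp_law (fun d => khat d + alpha < kstar)%N +
  prob cp_law (fun d => kstar + alpha < khat d)%N.
Proof. exact: prob_orE_le cp_law_ge0 _ _. Qed.

Lemma prob_early_le : prob cp_law (fun d => khat d + alpha < kstar)%N <= Num.min t B.
Proof.
apply: (prob_side_le P0_pmf P1_pmf P01 cp_law_ge0 cp_law_sum1 P0_pmf pre_change_uniq
  cp_law_pre alpha_gt0 pre_change_witness (@llr_span_ge _ _ P0 P1)
  (mean_llr_le P0_pmf P1_pmf)).
by move=> l /andP [l_gt0 l_lt1]; exists (1 - l); rewrite ?mgf_llr_chernoff //; lra.
Qed.

Lemma prob_late_le : prob cp_law (fun d => kstar + alpha < khat d)%N <= Num.min t B.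
Proof.
apply: (prob_side_le P0_pmf P1_pmf P01 cp_law_ge0 cp_law_sum1 P1_pmf post_change_uniq
  cp_law_post alpha_gt0 post_change_witness _ (mean_neg_llr_le P0_pmf P1_pmf)).
  by move=> x y; have := @llr_span_ge _ _ P0 P1 y x; lra.
by move=> l /andP [l_gt0 l_lt1]; exists l; rewrite ?mgf_neg_llr_chernoff //; lra.
Qed.

End ChangePointData.

Unset Implicit Arguments.

Theorem corollary3p2 (R : realType) (X : finType) (P0 P1 : X -> R)
  (n kstar alpha : nat) (khat : {ffun 'I_n -> X} -> nat) :
  full_pmf P0 -> full_pmf P1 -> P0 <> P1 ->
  (1 < n)%N -> (1 < kstar <= n)%N ->
  is_argmax_estimator P0 P1 khat ->
  (1 <= alpha <= n)%N ->
  let s := llr_span P0 P1 in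
  let C := Num.min (KL P0 P1) (KL P1 P0) in
  let t := expR (- (alpha%:R * C ^+ 2 / s ^+ 2)) in
  let M := ((n - 1) %/ alpha)%N in
  miss_prob kstar alpha P0 P1 khat
    <= 2 * Num.min (t * (1 - t ^+ M) / (1 - t))
                   (expR (- (alpha%:R * chernoff_info P0 P1))).
Proof.
move=> P0_pmf P1_pmf P01 n_gt1 kstar_range khat_max /andP [alpha_gt0 _]; cbv zeta.
set s := llr_span P0 P1; set C := Num.min (KL P0 P1) (KL P1 P0).
set t := expR (- (alpha%:R * C ^+ 2 / s ^+ 2)); set M := ((n - 1) %/ alpha)%N.
pose i0 : 'I_n := Ordinal (ltnW n_gt1).
set B := expR (- (alpha%:R * chernoff_info P0 P1)).
have [alpha_big | alpha_le] := ltnP (n - 1) alpha.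
  rewrite (miss_prob_eq0 kstar_range khat_max alpha_big) /M divn_small //.
  by rewrite expr0 subrr mulr0 mul0r min_l ?expR_ge0 ?mulr0.
have C_gt0 : 0 < C := KL_min_gt0 P0_pmf P1_pmf P01.
have s_gt0 : 0 < s by have := KL_min_le_span P0_pmf P1_pmf; rewrite -/s -/C; lra.
have t_range : 0 < t < 1.
  by rewrite expR_gt0 expR_lt1 oppr_lt0 /= divr_gt0 ?mulr_gt0 ?exprn_gt0 ?ltr0n.
have M_gt0 : (0 < M)%N by rewrite divn_gt0.
have min_le : Num.min t B <= Num.min (t * (1 - t ^+ M) / (1 - t)) B.
  by rewrite le_min !ge_min le_geometric_sum ?lexx ?orbT.
apply: le_trans (miss_prob_le _ _ _ P0_pmf P1_pmf) _.
rewrite mulr_natl mulr2n; apply: lerD; apply: le_trans min_le.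
  exact (prob_early_le i0 kstar_range khat_max P0_pmf P1_pmf P01 alpha_gt0).
exact (prob_late_le i0 kstar_range khat_max P0_pmf P1_pmf P01 alpha_gt0).
Qed.
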